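(* Let $B$ be a complete filtered BV algebra and $r\in F^1B$ odd. Define the operator $T(\exp(r)):B\to B$ by $$T(\exp(r))a=\exp\!\big(c(\exp(r))\big)\cdot\exp(r)a,$$ where $\exp(r)a=\sum_{k\ge0}\frac{\mathrm{ad}(r)^k a}{k!}$, $\mathrm{ad}(r)=\{r,\cdot\}$, $c(\exp(r))=\sum_{n\ge0}\frac{\mathrm{ad}(r)^n(\partial r)}{(n+1)!}$, and $\exp(c)=\sum_{m\ge0}c^m/m!$ is the exponential in the algebra $B$. Then $\partial\circ T(\exp(r))=T(\exp(r))\circ\partial$.
   Context: A BV algebra is a $\mathbb Z_2$-graded unital graded-commutative algebra $B$ (parity $\tilde a$) with an odd bracket $\{\cdot,\cdot\}$ making it an odd Poisson algebra ($\{a,b\}=-(-1)^{(\tilde a+1)(\tilde b+1)}\{b,a\}$, graded Jacobi for shifted parity, $\{a,bc\}=\{a,b\}c+(-1)^{(\tilde a+1)\tilde b}b\{a,c\}$), and an odd operator $\partial$ with $\partial^2=0$ and $(-1)^{\tilde a}\{a,b\}=-\partial(ab)+(\partial a)b+(-1)^{\tilde a}a(\partial b)$. ''Complete filtered'' means $B$ carries a descending filtration $B=F^0B\supseteq F^1B\supseteq\cdots$ by graded subspaces with $F^iF^j\subseteq F^{i+j}$, $\{F^i,F^j\}\subseteq F^{i+j}$, $\partial F^i\subseteq F^i$, and $B$ is complete with respect to it, so that all series converge. *)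

From mathcomp Require Import all_boot all_order all_algebra.
From Stdlib Require Import ClassicalEpsilon.
Set Implicit Arguments. Unset Strict Implicit. Unset Printing Implicit Defensive.
Import GRing.Theory.
Local Open Scope ring_scope.

Section BV.
Variables (K : fieldType) (B : algType K).

Definition sgn (n : nat) : B := (-1) ^+ n.

(* G p a : a is homogeneous of parity p (false = even, true = odd).
   F i a : a lies in the i-th filtration step F^i B.
   br    : the odd bracket {.,.};   d : the BV operator (partial). *)
Record complete_filtered_BV (G : bool -> B -> Prop) (F : nat -> B -> Prop)
    (br : B -> B -> B) (d : B -> B) : Prop := {
  G_0 : forall p, G p 0;
  G_add : forall p a b, G p a -> G p b -> G p (a + b);
  G_scale : forall p (k : K) a, G p a -> G p (k *: a);
  G_decomp : forall a, exists a0 a1, [/\ G false a0, G true a1 & a = a0 + a1];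
  G_direct : forall a, G false a -> G true a -> a = 0;
  G_one : G false 1;
  G_mul : forall p q a b, G p a -> G q b -> G (addb p q) (a * b);
  mul_gcomm : forall p q a b, G p a -> G q b ->
      a * b = sgn (p * q) * (b * a);
  br_addl : forall a b c, br (a + b) c = br a c + br b c;
  br_addr : forall a b c, br a (b + c) = br a b + br a c;
  br_scalel : forall (k : K) a b, br (k *: a) b = k *: br a b;
  br_scaler : forall (k : K) a b, br a (k *: b) = k *: br a b;
  G_br : forall p q a b, G p a -> G q b -> G (~~ addb p q) (br a b);
  br_skew : forall p q a b, G p a -> G q b ->
      br a b = - (sgn (p.+1 * q.+1) * br b a);
  br_jacobi : forall p q a b c, G p a -> G q b ->
      br a (br b c) = br (br a b) c + sgn (p.+1 * q.+1) * br b (br a c);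
  br_leibniz : forall p q a b c, G p a -> G q b ->
      br a (b * c) = br a b * c + sgn (p.+1 * q) * (b * br a c);
  d_add : forall a b, d (a + b) = d a + d b;
  d_scale : forall (k : K) a, d (k *: a) = k *: d a;
  G_d : forall p a, G p a -> G (~~ p) (d a);
  d_sq : forall a, d (d a) = 0;
  bv_rel : forall p a b, G p a ->
      sgn p * br a b = - d (a * b) + d a * b + sgn p * (a * d b);
  F_0 : forall a, F 0%N a;
  F_decr : forall i a, F i.+1 a -> F i a;
  F_zero : forall i, F i 0;
  F_add : forall i a b, F i a -> F i b -> F i (a + b);
  F_scale : forall i (k : K) a, F i a -> F i (k *: a);
  F_graded : forall i a, F i a -> exists a0 a1,
      [/\ G false a0, G true a1, F i a0, F i a1 & a = a0 + a1];
  F_mul : forall i j a b, F i a -> F j b -> F (i + j)%N (a * b);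
  F_br : forall i j a b, F i a -> F j b -> F (i + j)%N (br a b);
  F_d : forall i a, F i a -> F i (d a);
  F_sep : forall a, (forall i, F i a) -> a = 0;
  F_complete : forall u : nat -> B,
      (forall i, exists N, forall m n, (N <= m)%N -> (N <= n)%N -> F i (u m - u n)) ->
      exists L, forall i, exists N, forall n, (N <= n)%N -> F i (u n - L)
}.

Definition converges (F : nat -> B -> Prop) (u : nat -> B) (L : B) : Prop :=
  forall i, exists N, forall n, (N <= n)%N -> F i (u n - L).

Definition flim (F : nat -> B -> Prop) (u : nat -> B) : B :=
  epsilon (inhabits 0) (converges F u).

Definition fseries (F : nat -> B -> Prop) (t : nat -> B) : B :=
  flim F (fun n => \sum_(k < n) t k).

Definition exp_ad F br (r a : B) : B :=
  fseries F (fun k => (k`!%:R : K)^-1 *: iter k (br r) a).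

Definition c_exp F br (d : B -> B) (r : B) : B :=
  fseries F (fun n => ((n.+1)`!%:R : K)^-1 *: iter n (br r) (d r)).

Definition expB F (x : B) : B :=
  fseries F (fun m => (m`!%:R : K)^-1 *: x ^+ m).

Definition T_exp F br d (r a : B) : B :=
  expB F (c_exp F br d r) * exp_ad F br r a.

End BV.

(* Write s = d r, E = exp(ad r) and c = c(exp r). From d^2 = 0 and the BV relation,
   d {r, b} = {s, b} + {r, d b}, and ad r is a derivation of the bracket along even
   elements, so d ad(r)^k = ad(r)^k d + sum_i C(k, i+1) ad(ad(r)^i s) ad(r)^(k-i-1).
   Weighted by 1/k! the correction is a Cauchy product, whence d E = E d + ad(c) E.
   The same computation with s in place of b, symmetrised using the symmetry of the
   bracket on even elements, gives 2 d c = {c, c}.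
   For even c, d (c y) = d c . y + c . d y - {c, y}; expanding d (c^m y) and summing the
   exponential series, 2 d c = {c, c} makes the d c terms cancel, so
   d (exp(c) y) = exp(c) (d y - {c, y}). Hence
   d (T a) = exp(c) (d (E a) - {c, E a}) = exp(c) E (d a) = T (d a). *)

From mathcomp Require Import all_boot all_order all_algebra ring zify.
From Stdlib Require Import ClassicalEpsilon FunctionalExtensionality.
Set Implicit Arguments. Unset Strict Implicit. Unset Printing Implicit Defensive.
Import GRing.Theory.
Local Open Scope ring_scope.

Section AdditiveMap.
Variables (V W : zmodType) (f : V -> W).
Hypothesis fD : forall a b, f (a + b) = f a + f b.

Lemma additive0 : f 0 = 0.
Proof. by apply: (addrI (f 0)); rewrite -fD !addr0. Qed.

Lemma additiveN a : f (- a) = - f a.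
Proof. by apply/eqP; rewrite -addr_eq0 -fD addNr additive0. Qed.

Lemma additiveB a b : f (a - b) = f a - f b.
Proof. by rewrite fD additiveN. Qed.

Lemma additiveMn a n : f (a *+ n) = f a *+ n.
Proof. by elim: n => [|n IH]; rewrite ?additive0 // !mulrS fD IH. Qed.

Lemma additive_sum I (r : seq I) (P : pred I) (t : I -> V) :
  f (\sum_(i <- r | P i) t i) = \sum_(i <- r | P i) f (t i).
Proof. exact: (big_morph f fD additive0). Qed.

End AdditiveMap.

(** * Series in a complete filtered algebra *)

Section CompleteFiltration.
Variables (K : fieldType) (B : algType K) (F : nat -> B -> Prop).

Record complete_filtration : Prop := {
  filt_top : forall a, F 0 a;
  filt_decr : forall i a, F i.+1 a -> F i a;
  filt_zero : forall i, F i 0;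
  filt_add : forall i a b, F i a -> F i b -> F i (a + b);
  filt_opp : forall i a, F i a -> F i (- a);
  filt_sep : forall a, (forall i, F i a) -> a = 0;
  filt_complete : forall u : nat -> B,
    (forall i, exists N, forall m n, (N <= m)%N -> (N <= n)%N -> F i (u m - u n)) ->
    exists L, converges F u L
}.

Hypothesis HF : complete_filtration.

Lemma filt_le i j a : (i <= j)%N -> F j a -> F i a.
Proof.
move=> /subnK <-; elim: (j - i)%N => [|k IH] // Fa.
by apply: IH; apply: (filt_decr HF).
Qed.

Lemma filt_sub i a b : F i a -> F i b -> F i (a - b).
Proof. by move=> Fa Fb; apply: (filt_add HF) => //; apply: (filt_opp HF). Qed.

Lemma filt_sum i I (r : seq I) (P : pred I) (t : I -> B) :
  (forall k, P k -> F i (t k)) -> F i (\sum_(k <- r | P k) t k).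
Proof. by move=> Ft; apply: big_ind => //; [apply: (filt_zero HF) | apply: (filt_add HF)]. Qed.

Lemma filt_muln i a n : F i a -> F i (a *+ n).
Proof. by move=> Fa; rewrite -[n]card_ord -sumr_const; apply: filt_sum. Qed.

Definition psum (t : nat -> B) n := \sum_(k < n) t k.

Definition vanishing (t : nat -> B) :=
  forall i, exists N, forall n, (N <= n)%N -> F i (t n).

Definition filtered (t : nat -> B) := forall n, F n (t n).

Lemma filtered_vanishing t : filtered t -> vanishing t.
Proof. by move=> Ft i; exists i => n /filt_le; apply. Qed.

Lemma vanishing_shift t : vanishing (fun n => t n.+1) <-> vanishing t.
Proof.
split=> Ht i; have [N HN] := Ht i.
  by exists N.+1; case=> // n; apply: HN.
by exists N => n /leqW; apply: HN.
Qed.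

Lemma eq_vanishing t t' : t =1 t' -> vanishing t -> vanishing t'.
Proof. by move=> e Ht i; have [N HN] := Ht i; exists N => n; rewrite -e; apply: HN. Qed.

Lemma vanishing_add t t' : vanishing t -> vanishing t' -> vanishing (fun n => t n + t' n).
Proof.
move=> Ht Ht' i; have [N HN] := Ht i; have [N' HN'] := Ht' i.
exists (maxn N N') => n; rewrite geq_max => /andP[nN nN'].
by apply: (filt_add HF); [apply: HN | apply: HN'].
Qed.

Lemma vanishing_map (f : B -> B) t :
  (forall i a, F i a -> F i (f a)) -> vanishing t -> vanishing (fun n => f (t n)).
Proof. by move=> fF Ht i; have [N HN] := Ht i; exists N => n /HN /fF. Qed.

Lemma psumS t n : psum t n.+1 = psum t n + t n.
Proof. exact: big_ord_recr. Qed.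

Lemma psum0 t : psum t 0 = 0.
Proof. exact: big_ord0. Qed.

Lemma psum_sub_filt i t k n : (forall j, (k <= j)%N -> F i (t j)) -> (k <= n)%N ->
  F i (psum t n - psum t k).
Proof.
move=> Ft /subnK <-; elim: (n - k)%N => [|m IH]; first by rewrite subrr; apply: (filt_zero HF).
by rewrite addSn psumS addrAC; apply: (filt_add HF) => //; apply: Ft; apply: leq_addl.
Qed.

Lemma converges_unique u L L' : converges F u L -> converges F u L' -> L = L'.
Proof.
move=> HL HL'; apply/eqP; rewrite -subr_eq0; apply/eqP; apply: (filt_sep HF) => i.
have [N HN] := HL i; have [N' HN'] := HL' i.
have -> : L - L' = (u (maxn N N') - L') - (u (maxn N N') - L).
  by rewrite opprB [RHS]addrC addrA subrK.
by apply: filt_sub; [apply: HN'; apply: leq_maxr | apply: HN; apply: leq_maxl].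
Qed.

Lemma fseriesP t : vanishing t -> converges F (psum t) (fseries F t).
Proof.
move=> Ht; apply: epsilon_spec; apply: (filt_complete HF) => i.
have [N HN] := Ht i; exists N => m n mN nN.
have -> : psum t m - psum t n = (psum t m - psum t N) - (psum t n - psum t N).
  by rewrite opprB addrA subrK.
by apply: filt_sub; apply: psum_sub_filt.
Qed.

Lemma fseries_eq t L : vanishing t -> converges F (psum t) L -> fseries F t = L.
Proof. by move=> /fseriesP; apply: converges_unique. Qed.

Lemma eq_fseries t t' : t =1 t' -> fseries F t = fseries F t'.
Proof. by move=> /functional_extensionality ->. Qed.

Lemma fseriesD t t' : vanishing t -> vanishing t' ->
  fseries F (fun n => t n + t' n) = fseries F t + fseries F t'.
Proof.
move=> Ht Ht'; apply: fseries_eq; first exact: vanishing_add.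
move=> i; have [N HN] := fseriesP Ht i; have [N' HN'] := fseriesP Ht' i.
exists (maxn N N') => n; rewrite geq_max => /andP[nN nN'].
by rewrite /psum big_split opprD addrACA; apply: (filt_add HF); [apply: HN | apply: HN'].
Qed.

Lemma fseries_shift t : vanishing t -> fseries F t = t 0%N + fseries F (fun n => t n.+1).
Proof.
move=> Ht; have Ht1 : vanishing (fun n => t n.+1) by apply/vanishing_shift.
apply: fseries_eq => // i; have [N HN] := fseriesP Ht1 i.
exists N.+1; case=> // n /HN.
by rewrite /psum big_ord_recl opprD addrACA subrr add0r.
Qed.

Lemma filt_fseries i t : vanishing t -> (forall n, F i (t n)) -> F i (fseries F t).
Proof.
move=> Ht Fi; have [N HN] := fseriesP Ht i.
rewrite -[fseries F t](subKr (psum t N)); apply: filt_sub; last exact: HN.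
exact: filt_sum.
Qed.

Lemma fseries_map (f : B -> B) t :
  (forall a b, f (a + b) = f a + f b) -> (forall i a, F i a -> F i (f a)) ->
  vanishing t -> f (fseries F t) = fseries F (fun n => f (t n)).
Proof.
move=> fD fF Ht; symmetry; apply: fseries_eq; first exact: vanishing_map.
move=> i; have [N HN] := fseriesP Ht i; exists N => n /HN /fF.
by rewrite /psum additiveB // additive_sum.
Qed.

Lemma fseriesN t : vanishing t -> fseries F (fun n => - t n) = - fseries F t.
Proof. by move=> Ht; rewrite (fseries_map (f := -%R)) //; [apply: opprD | apply: (filt_opp HF)]. Qed.

Section CauchyProduct.
Variable m : B -> B -> B.
Hypothesis mDl : forall a b c, m (a + b) c = m a c + m b c.
Hypothesis mDr : forall a b c, m a (b + c) = m a b + m a c.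
Hypothesis mF : forall i j a b, F i a -> F j b -> F (i + j) (m a b).

Definition conv (t u : nat -> B) n := \sum_(i < n.+1) m (t i) (u (n - i)%N).

Lemma psum_conv t u n : psum (conv t u) n = \sum_(i < n) m (t i) (psum u (n - i)%N).
Proof.
elim: n => [|n IH]; first by rewrite /psum !big_ord0.
rewrite psumS IH /conv.
rewrite [RHS](eq_bigr (fun i : 'I_n.+1 => m (t i) (psum u (n - i)%N) + m (t i) (u (n - i)%N))).
  rewrite big_split /= [X in _ = X + _]big_ord_recr /= subnn psum0.
  by rewrite (additive0 (mDr _)) addr0.
by move=> i _; rewrite subSn -1?ltnS // psumS mDr.
Qed.

Lemma filtered_conv t u : filtered t -> filtered u -> filtered (conv t u).
Proof.
move=> Ft Fu n; apply: filt_sum => i _.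
by rewrite -{1}(subnKC (_ : i <= n)%N) -1?ltnS //; apply: mF.
Qed.

Lemma fseries_conv t u : filtered t -> filtered u ->
  m (fseries F t) (fseries F u) = fseries F (conv t u).
Proof.
move=> Ft Fu; symmetry; apply: fseries_eq; first exact/filtered_vanishing/filtered_conv.
set St := fseries F t; set Su := fseries F u.
move=> i; have [N HN] := fseriesP (filtered_vanishing Ft) i.
have [N' HN'] := fseriesP (filtered_vanishing Fu) i.
exists (maxn i (maxn N N')) => n; rewrite !geq_max => /and3P[ni nN nN'].
have mBl a b c : m (a - b) c = m a c - m b c by apply: (additiveB (fun x y => mDl x y c)).
have mBr a b c : m a (b - c) = m a b - m a c by apply: additiveB.
have trunc : F i (m (psum t n) (psum u n) - psum (conv t u) n).
  apply: (filt_le ni); rewrite psum_conv /psum (additive_sum (fun x y => mDl x y _)) -sumrB.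
  apply: filt_sum => k _; rewrite -mBr; have kn : (k <= n)%N := ltnW (ltn_ord k).
  rewrite -{1}(subnKC kn); apply: mF; first exact: Ft.
  by apply: psum_sub_filt (leq_subr _ _) => j /filt_le; apply.
have -> : psum (conv t u) n - m St Su =
    - (m (psum t n) (psum u n) - psum (conv t u) n)
    + (m (psum t n - St) (psum u n) + m St (psum u n - Su)).
  by rewrite mBl mBr opprB !subrKA.
apply: (filt_add HF); first exact: (filt_opp HF).
apply: (filt_add HF); first by rewrite -(addn0 i); apply: mF; [exact: HN | exact: (filt_top HF)].
by rewrite -(add0n i); apply: mF; [exact: (filt_top HF) | exact: HN'].
Qed.

End CauchyProduct.

End CompleteFiltration.

Section FactorialCoefficients.
Variable K : fieldType.
Hypothesis charK : [pchar K] =i pred0.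

Lemma natf_neq0 n : (0 < n)%N -> (n%:R : K) != 0.
Proof. by rewrite ((pcharf0P K).1 charK) -lt0n. Qed.

Lemma fact_neq0 n : (n`!%:R : K) != 0.
Proof. exact/natf_neq0/fact_gt0. Qed.

Lemma invfact_mulS n : ((n.+1)`!%:R : K)^-1 * n.+1%:R = (n`!%:R)^-1.
Proof. by rewrite factS natrM invfM mulrAC mulVf ?mul1r ?natf_neq0. Qed.

Lemma invfact_binom n i : (i <= n)%N ->
  ((n.+1)`!%:R : K)^-1 * 'C(n.+1, i.+1)%:R = ((i.+1)`!%:R)^-1 * ((n - i)`!%:R)^-1.
Proof.
move=> le_in; have := bin_fact (le_in : (i.+1 <= n.+1)%N); rewrite subSS => <-.
have C_neq0 : ('C(n.+1, i.+1)%:R : K) != 0 by apply/natf_neq0; rewrite bin_gt0.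
by rewrite natrM invfM mulrC mulrA mulfV // mul1r natrM invfM.
Qed.

(* The two terms add up because (i+1) + (n-i+1) = n+2. *)
Lemma invfact_binom_sym n i : (i <= n)%N ->
  ((n.+2)`!%:R : K)^-1 * 'C(n.+1, i.+1)%:R + ((n.+2)`!%:R : K)^-1 * 'C(n.+1, (n - i).+1)%:R =
  ((i.+1)`!%:R)^-1 * (((n - i).+1)`!%:R)^-1.
Proof.
move=> le_in; rewrite [(n.+2)`!]factS natrM invfM -!mulrA.
rewrite invfact_binom // invfact_binom ?leq_subr // subKn //.
rewrite [(i.+1)`!]factS [((n - i).+1)`!]factS !natrM.
have -> : ((n.+2)%:R : K) = (i.+1)%:R + ((n - i).+1)%:R.
  by rewrite -natrD addSn addnS subnKC.
have IJ_neq0 : ((i.+1)%:R + ((n - i).+1)%:R : K) != 0.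
  by rewrite -natrD natf_neq0.
move: IJ_neq0 (natf_neq0 (ltn0Sn i)) (natf_neq0 (ltn0Sn (n - i))).
move: (fact_neq0 i) (fact_neq0 (n - i)).
set I := ((i.+1)%:R : K); set J := (((n - i).+1)%:R : K).
set fi := (i`!%:R : K); set fj := ((n - i)`!%:R : K).
clearbody I J fi fj => ? ? ? ? ?; field; exact/and5P.
Qed.

End FactorialCoefficients.

Lemma BV_complete_filtration (K : fieldType) (B : algType K) G (F : nat -> B -> Prop) br d :
  complete_filtered_BV G F br d -> complete_filtration F.
Proof.
move=> HB; split; [exact: (F_0 HB) | exact: (F_decr HB) | exact: (F_zero HB) |
  exact: (F_add HB) | | exact: (F_sep HB) | exact: (F_complete HB)].
by move=> i a Fa; rewrite -scaleN1r; apply: (F_scale HB).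
Qed.

(** * Identities in a BV algebra *)

Section BV.
Variables (K : fieldType) (B : algType K) (G : bool -> B -> Prop) (F : nat -> B -> Prop).
Variables (br : B -> B -> B) (d : B -> B).
Hypothesis HB : complete_filtered_BV G F br d.

Local Notation HF := (BV_complete_filtration HB).

Lemma sgnE n : sgn B n = (-1) ^+ odd n.
Proof. by rewrite /sgn -signr_odd. Qed.

Lemma G_opp p a : G p a -> G p (- a).
Proof. by move=> Ga; rewrite -scaleN1r; apply: (G_scale HB). Qed.

Lemma G_sum p I (r : seq I) (P : pred I) (t : I -> B) :
  (forall k, P k -> G p (t k)) -> G p (\sum_(k <- r | P k) t k).
Proof. by move=> Gt; apply: big_ind => //; [apply: (G_0 HB) | apply: (G_add HB)]. Qed.

Lemma G_both p a : G p a -> G (~~ p) a -> a = 0.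
Proof. by case: p => Ga Gna; apply: (G_direct HB). Qed.

Lemma G_split p a : exists x y, [/\ G p x, G (~~ p) y & a = x + y].
Proof.
have [a0 [a1 [Ga0 Ga1 ->]]] := G_decomp HB a.
by case: p; [exists a1, a0; rewrite addrC | exists a0, a1].
Qed.

Lemma F_split p i a : F i a -> exists x y, [/\ G p x, G (~~ p) y, F i x, F i y & a = x + y].
Proof.
move=> /(F_graded HB) [a0 [a1 [Ga0 Ga1 Fa0 Fa1 ->]]].
by case: p; [exists a1, a0; rewrite addrC | exists a0, a1].
Qed.

(* Each F^i is a graded subspace, so the component of L of the other parity lies in every F^i. *)
Lemma G_converges p u L : (forall n, G p (u n)) -> converges F u L -> G p L.
Proof.
move=> Gu HL; have [x [y [Gx Gy eL]]] := G_split p L.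
suff y0 : y = 0 by rewrite eL y0 addr0.
apply: (filt_sep HF) => i; have [N HN] := HL i.
have [z [w [Gz Gw Fz Fw ezw]]] := F_split p (HN N (leqnn N)).
have yw0 : y + w = 0.
  apply: (G_both (p := p)); last exact: (G_add HB).
  have -> : y + w = u N - x - z.
    apply/eqP; rewrite eq_sym -subr_eq0.
    have -> : u N - x - z - (y + w) = (u N - L) - (z + w).
      by rewrite eL !opprD !addrA; congr (_ + _); rewrite addrAC.
    by rewrite ezw subrr.
  by apply: (G_add HB); [apply: (G_add HB) | ]; rewrite ?Gu //; apply: G_opp.
by rewrite -[y](addrK w) yw0 sub0r; apply: (filt_opp HF).
Qed.

Lemma d_mul_even x y : G false x -> d (x * y) = d x * y + x * d y - br x y.
Proof.
move=> Gx; have := bv_rel HB y Gx; rewrite /sgn expr0 !mul1r -addrA => ->.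
by rewrite opprD opprK addrCA subrr addr0.
Qed.

Lemma d_mul_odd x y : G true x -> d (x * y) = d x * y - x * d y + br x y.
Proof.
move=> Gx; have := bv_rel HB y Gx; rewrite /sgn expr1 !mulN1r => /(congr1 -%R).
by rewrite opprK -addrA => ->; rewrite opprD opprK addrCA subrr addr0.
Qed.

Lemma br_x1 p x : G p x -> br x 1 = 0.
Proof.
move=> Gx; have := br_leibniz HB 1 Gx (G_one HB).
rewrite !mulr1 sgnE muln0 expr0 !mul1r -{1}[br x 1]addr0.
by move/addrI->.
Qed.

Lemma br_sym_even x y : G false x -> G false y -> br x y = br y x.
Proof. by move=> Gx Gy; rewrite (br_skew HB Gx Gy) sgnE /= expr1 mulN1r opprK. Qed.

Lemma G_expr x m : G false x -> G false (x ^+ m).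
Proof.
move=> Gx; elim: m => [|m IH]; first by rewrite expr0; apply: (G_one HB).
by rewrite exprS; apply: (G_mul HB Gx IH).
Qed.

Lemma F_expr i x m : F i x -> F (i * m) (x ^+ m).
Proof.
move=> Fx; elim: m => [|m IH]; first by rewrite muln0 expr0; apply: (F_0 HB).
by rewrite exprS mulnS; apply: (F_mul HB Fx IH).
Qed.

Lemma odd_even_comm x y : G true x -> G false y -> x * y = y * x.
Proof. by move=> Gx Gy; rewrite (mul_gcomm HB Gx Gy) sgnE mul1r. Qed.

Lemma mulr_expr_pred (x y : B) k : (x * (x ^+ k.-1 * y)) *+ k = (x ^+ k * y) *+ k.
Proof. by case: k => [|k]; rewrite ?mulr0n // mulrA -exprS. Qed.

Lemma br_even_expr x m : G false x -> br x (x ^+ m) = (x ^+ m.-1 * br x x) *+ m.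
Proof.
move=> Gx; elim: m => [|m IH]; first by rewrite expr0 (br_x1 Gx) mulr0n.
rewrite exprS (br_leibniz HB _ Gx Gx) sgnE mul1r IH mulrnAr mulr_expr_pred.
rewrite -(odd_even_comm (G_br HB Gx Gx) (G_expr m Gx)).
by case: m {IH} => [|m]; rewrite ?mulr1n ?expr0 ?mulr1 ?mul1r // -mulrS.
Qed.

Lemma F_mulr i x y : F i x -> F i (x * y).
Proof. by move=> Fx; rewrite -[i]addn0; apply: (F_mul HB Fx (F_0 HB y)). Qed.

Lemma fseries_mulr t y : vanishing F t -> fseries F t * y = fseries F (fun n => t n * y).
Proof. exact: (fseries_map HF (fun a b => mulrDl a b y) (fun i a => @F_mulr i a y)). Qed.

Section OddElement.
Variable r : B.
Hypothesis r_odd : G true r.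
Hypothesis r_F1 : F 1 r.

Local Notation s := (d r).
Local Notation ad k := (iter k (br r)).

Lemma s_even : G false s.
Proof. exact: (G_d HB r_odd). Qed.

Lemma G_ad p k a : G p a -> G p (ad k a).
Proof. by move=> Ga; elim: k => [|k IH] //=; have := G_br HB r_odd IH; case: p {Ga IH}. Qed.

Lemma F_ad i k a : F i a -> F (k + i) (ad k a).
Proof. by move=> Fa; elim: k => [|k IH] //=; rewrite addSn -add1n; apply: (F_br HB r_F1 IH). Qed.

Lemma ad0 k : ad k 0 = 0.
Proof. by elim: k => [|k IH] //=; rewrite IH (additive0 (br_addr HB r)). Qed.

Lemma d_br_r b : d (br r b) = br s b + br r (d b).
Proof.
have dsb : d (s * b) = s * d b - br s b.
  by rewrite (d_mul_even _ s_even) (d_sq HB) mul0r add0r.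
have drdb : d (r * d b) = s * d b + br r (d b).
  by rewrite (d_mul_odd _ r_odd) (d_sq HB) mulr0 subr0.
have := congr1 d (d_mul_odd b r_odd); rewrite (d_sq HB) !(d_add HB) (additiveN (d_add HB)) dsb drdb.
move/eqP; rewrite eq_sym addrC addr_eq0 => /eqP ->.
by rewrite opprB (addrC (s * d b)) addrKA opprK addrC.
Qed.

Lemma br_r_derivation x y : G false x -> br r (br x y) = br (br r x) y + br x (br r y).
Proof. by move=> Gx; rewrite (br_jacobi HB y r_odd Gx) sgnE mul1r. Qed.

Definition ad_defect b k := \sum_(i < k) br (ad i s) (ad (k - i.+1) b) *+ 'C(k, i.+1).

Lemma F_ad_defect b k : F k (ad_defect b k).
Proof.
apply: (filt_sum HF) => i _; apply: (filt_muln HF).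
apply: (filt_le HF (_ : k <= (i + 1) + (k - i.+1 + 0))%N).
  by rewrite addn0 addn1 subnKC.
by apply: (F_br HB); apply: F_ad; [apply: (F_d HB r_F1) | apply: (F_0 HB)].
Qed.

(* Pascal's rule C(k+1, i+1) = C(k, i+1) + C(k, i) merges the two sums of the inductive step. *)
Lemma d_ad k a : d (ad k a) = ad k (d a) + ad_defect a k.
Proof.
elim: k => [|k IH]; first by rewrite /ad_defect big_ord0 addr0.
rewrite [ad k.+1 a]/= d_br_r IH (br_addr HB) (additive_sum (br_addr HB r)) /ad_defect.
rewrite (eq_bigr (fun i : 'I_k => (br (ad i.+1 s) (ad (k - i.+1) a) +
   br (ad i s) (ad (k - i) a)) *+ 'C(k, i.+1))); last first.
  move=> i _; rewrite (additiveMn (br_addr HB r)) br_r_derivation; last exact: G_ad s_even.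
  by rewrite -[br r (ad _ a)]/(ad (k - i.+1).+1 a) subnSK.
rewrite [in RHS](eq_bigr (fun i : 'I_k.+1 => br (ad i s) (ad (k - i) a) *+ 'C(k, i.+1) +
   br (ad i s) (ad (k - i) a) *+ 'C(k, i))); last first.
  by move=> i _; rewrite subSS binS mulrnDr.
rewrite big_split /= big_ord_recr /= bin_small // mulr0n addr0.
rewrite big_ord_recl /= bin0 mulr1n subn0.
rewrite (eq_bigr _ (fun i _ => mulrnDl _ _ _)) big_split /=.
have -> : \sum_(i < k) br (br r (ad (0 + i) s)) (ad (k - bump 0 i) a) *+ 'C(k, bump 0 i)
   = \sum_(i < k) br (br r (ad i s)) (ad (k - i.+1) a) *+ 'C(k, i.+1).
  by apply: eq_bigr => i _; rewrite add0n /bump leq0n add1n.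
by rewrite [LHS]addrCA; congr (_ + _); rewrite addrA addrC.
Qed.

(** * The series exp(ad r) and c(exp r) *)

Hypothesis charK : [pchar K] =i pred0.

Local Notation c := (c_exp F br d r).
Local Notation E a := (exp_ad F br r a).

Definition exp_ad_term a k := (k`!%:R : K)^-1 *: ad k a.
Definition c_term k := ((k.+1)`!%:R : K)^-1 *: ad k s.

Lemma filtered_exp_ad_term a : filtered F (exp_ad_term a).
Proof. by move=> k; apply: (F_scale HB); rewrite -[X in F X _]addn0; apply: F_ad; apply: (F_0 HB). Qed.

Lemma c_term_F k : F k.+1 (c_term k).
Proof. by apply: (F_scale HB); rewrite -[X in F X _]addn1; apply: F_ad; apply: (F_d HB r_F1). Qed.

Lemma filtered_c_term : filtered F c_term.
Proof. by move=> k; apply: (F_decr HB (c_term_F k)). Qed.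

Lemma c_F1 : F 1 c.
Proof.
apply: (filt_fseries HF (filtered_vanishing HF filtered_c_term)) => k.
exact: (filt_le HF (ltn0Sn k) (c_term_F k)).
Qed.

Lemma c_even : G false c.
Proof.
apply: (G_converges (u := psum c_term)).
  by move=> n; apply: G_sum => k _; apply: (G_scale HB); apply: G_ad s_even.
exact: (fseriesP HF (filtered_vanishing HF filtered_c_term)).
Qed.

Lemma d_exp_ad a : d (E a) = E (d a) + br c (E a).
Proof.
set t := fun k => (k`!%:R : K)^-1 *: ad_defect a k.
have Ft : vanishing F t.
  by apply/(filtered_vanishing HF) => k; apply: (F_scale HB); apply: F_ad_defect.
have Fe b := filtered_vanishing HF (filtered_exp_ad_term b).
have -> : d (E a) = E (d a) + fseries F t.
  rewrite /exp_ad (fseries_map HF (d_add HB) (F_d HB) (Fe a)) -(fseriesD HF (Fe _) Ft).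
  by apply: eq_fseries => k; rewrite (d_scale HB) d_ad scalerDr.
congr (_ + _).
rewrite (fseries_shift HF Ft) {1}/t /ad_defect big_ord0 scaler0 add0r.
rewrite /c_exp /exp_ad.
rewrite (fseries_conv HF (br_addl HB) (br_addr HB) (F_br HB) filtered_c_term (filtered_exp_ad_term a)).
apply: eq_fseries => k; rewrite /t /conv /ad_defect scaler_sumr; apply: eq_bigr => i _.
rewrite subSS -scaler_nat scalerA /c_term /exp_ad_term (br_scalel HB) (br_scaler HB) scalerA.
by rewrite invfact_binom // -ltnS.
Qed.

(* Symmetrise with {ad^i s, ad^(n-i) s} = {ad^(n-i) s, ad^i s}, both arguments being even. *)
Lemma conv_c_term n : let t := ((n.+2)`!%:R : K)^-1 *: ad_defect s n.+1 in
  t + t = conv br c_term c_term n.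
Proof.
pose g i := br (ad i s) (ad (n - i) s).
pose al i := ((n.+2)`!%:R : K)^-1 * 'C(n.+1, i.+1)%:R.
have t_al : ((n.+2)`!%:R : K)^-1 *: ad_defect s n.+1 = \sum_(i < n.+1) al i *: g i.
  by rewrite scaler_sumr; apply: eq_bigr => i _; rewrite subSS -scaler_nat scalerA.
have t_rev : \sum_(i < n.+1) al i *: g i = \sum_(i < n.+1) al (n - i)%N *: g i.
  rewrite (reindex_inj rev_ord_inj) /=; apply: eq_bigr => i _.
  have le_in : (i <= n)%N by rewrite -ltnS.
  rewrite subSS /g subKn //; congr (_ *: _).
  by apply: br_sym_even; apply: G_ad s_even.
rewrite /= t_al {1}t_rev -big_split /=; apply: eq_bigr => i _.
rewrite -scalerDl /c_term (br_scalel HB) (br_scaler HB) scalerA.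
by rewrite addrC invfact_binom_sym // -ltnS.
Qed.

Lemma d_c : d c + d c = br c c.
Proof.
set t := fun k => ((k.+1)`!%:R : K)^-1 *: ad_defect s k.
have Ft : vanishing F t.
  by apply/(filtered_vanishing HF) => k; apply: (F_scale HB); apply: F_ad_defect.
have Ft1 : vanishing F (fun k => t k.+1) by apply/vanishing_shift.
have -> : d c = fseries F (fun k => t k.+1).
  rewrite /c_exp (fseries_map HF (d_add HB) (F_d HB)); last exact: (filtered_vanishing HF filtered_c_term).
  rewrite (@eq_fseries _ _ _ _ t); last by move=> k; rewrite (d_scale HB) d_ad (d_sq HB) ad0 add0r.
  by rewrite (fseries_shift HF Ft) {1}/t /ad_defect big_ord0 scaler0 add0r.
rewrite -(fseriesD HF Ft1 Ft1) /c_exp.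
rewrite (fseries_conv HF (br_addl HB) (br_addr HB) (F_br HB) filtered_c_term filtered_c_term).
by apply: eq_fseries => n; rewrite -conv_c_term.
Qed.

End OddElement.

(** * The exponential of an even x with 2 d x = {x, x} *)

Section MaurerCartan.
Variable x : B.
Hypothesis x_even : G false x.
Hypothesis x_F1 : F 1 x.
Hypothesis dx : d x + d x = br x x.
Hypothesis charK : [pchar K] =i pred0.

Local Notation u := (d x).

Lemma u_odd : G true u.
Proof. exact: (G_d HB x_even). Qed.

Lemma u_comm m : u * x ^+ m = x ^+ m * u.
Proof. exact: (odd_even_comm u_odd (G_expr m x_even)). Qed.

Lemma d_expr_mul m y : d (x ^+ m * y) = x ^+ m * d y +
  (x ^+ m.-1 * (u * y - br x y)) *+ m - (x ^+ m.-2 * (u * y)) *+ (m * m.-1).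
Proof.
elim: m => [|m IH]; first by rewrite expr0 !mul1r mulr0n mul0n mulr0n subr0 addr0.
have u_xm : u * (x ^+ m * y) = x ^+ m * (u * y) by rewrite mulrA u_comm -mulrA.
have x_IH : x * d (x ^+ m * y) = x ^+ m.+1 * d y + (x ^+ m * (u * y - br x y)) *+ m
    - (x ^+ m.-1 * (u * y)) *+ (m.-1 * m).
  rewrite IH mulrBr mulrDr [x * (x ^+ m * d y)]mulrA -exprS !mulrnAr mulr_expr_pred.
  by rewrite mulnC !mulrnA mulr_expr_pred.
have br_xm : br x (x ^+ m * y) = (x ^+ m.-1 * (u * y)) *+ (2 * m) + x ^+ m * br x y.
  rewrite (br_leibniz HB y x_even (G_expr m x_even)) sgnE mul1r br_even_expr // -dx.
  by rewrite mulrnAl -mulrA mulrDl -mulr2n mulrnAr -mulrnA.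
have -> : (x ^+ m * (u * y - br x y)) *+ m.+1
    = x ^+ m * (u * y) - x ^+ m * br x y + (x ^+ m * (u * y - br x y)) *+ m.
  by rewrite mulrS mulrBr.
have -> : (x ^+ m.-1 * (u * y)) *+ (m.+1 * m)
    = (x ^+ m.-1 * (u * y)) *+ (m.-1 * m) + (x ^+ m.-1 * (u * y)) *+ (2 * m).
  by rewrite -mulrnDr; congr (_ *+ _); case: m {IH u_xm x_IH br_xm} => // m; lia.
rewrite {1}exprS -mulrA (d_mul_even _ x_even) u_xm x_IH br_xm.
set P := x ^+ m.+1 * d y; set Z := x ^+ m * (u * y); set X := x ^+ m * br x y.
set Y := (x ^+ m * (u * y - br x y)) *+ m.
set W1 := (x ^+ m.-1 * (u * y)) *+ (m.-1 * m); set W2 := (x ^+ m.-1 * (u * y)) *+ (2 * m).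
rewrite addrCA -!addrA; congr (_ + _); rewrite opprD (addrC W1) !opprD.
rewrite [LHS]addrCA; congr (_ + _); rewrite [RHS]addrCA; congr (_ + _).
by rewrite [LHS]addrC -addrA [RHS]addrCA.
Qed.

Lemma d_expB_mul y : d (expB F x * y) = expB F x * (d y - br x y).
Proof.
set e := fun m => ((m`!%:R : K)^-1 *: x ^+ m).
have ne : vanishing F e.
  apply/(filtered_vanishing HF) => m; apply: (F_scale HB).
  by rewrite -[X in F X _]mul1n; apply: F_expr.
set v := u * y - br x y; set w := u * y.
set Bs := fun m => ((m`!%:R : K)^-1 *: ((x ^+ m.-1 * v) *+ m)).
set Cs := fun m => ((m`!%:R : K)^-1 *: ((x ^+ m.-2 * w) *+ (m * m.-1))).
have eB m : Bs m.+1 = e m * v.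
  by rewrite /Bs /e -scaler_nat scalerA invfact_mulS // -scalerAl.
have eC m : Cs m.+2 = e m * w.
  by rewrite /Cs /e -scaler_nat scalerA /= natrM mulrA !invfact_mulS // -scalerAl.
have nev z : vanishing F (fun m => e m * z).
  exact: (vanishing_map (fun i a => @F_mulr i a z) ne).
have nB : vanishing F Bs by apply/vanishing_shift; apply: (eq_vanishing _ (nev v)) => m; rewrite eB.
have nC : vanishing F Cs.
  apply/(@vanishing_shift _ _ F Cs)/(@vanishing_shift _ _ F (fun n => Cs n.+1)).
  by apply: (eq_vanishing _ (nev w)) => m /=; rewrite eC.
(* By d_expr_mul, d (x^m y) / m! = e_m d y + B_m - C_m, and B, C are the series
   e (u y - {x, y}) and e (u y) shifted by one and by two places. *)
rewrite /expB -/e (fseries_mulr _ ne) (fseries_map HF (d_add HB) (F_d HB) (nev y)).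
rewrite (@eq_fseries _ _ _ _ (fun m => (e m * d y + Bs m) + - Cs m)); last first.
  by move=> m; rewrite /e -scalerAl (d_scale HB) d_expr_mul scalerBr scalerDr scalerAl.
rewrite (fseriesD HF (vanishing_add HF (nev _) nB)); last exact: (vanishing_map (filt_opp HF)).
rewrite (fseriesD HF (nev _) nB) (fseriesN HF nC) (fseries_shift HF nB) (eq_fseries F eB).
rewrite (fseries_shift HF nC) (fseries_shift HF (proj2 (vanishing_shift _ _) nC)).
rewrite /Bs /Cs /= !muln0 !mulr0n !scaler0 !add0r (eq_fseries F eC) -!fseries_mulr //.
by rewrite -mulrDr -mulrBr /v /w addrA addrAC addrK.
Qed.

End MaurerCartan.

End BV.

Theorem mainTheorem9 (K : fieldType) (B : algType K)
    (G : bool -> B -> Prop) (F : nat -> B -> Prop)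
    (br : B -> B -> B) (d : B -> B)
    (charK : [pchar K] =i pred0)
    (HB : complete_filtered_BV G F br d)
    (r : B) (r_odd : G true r) (r_F1 : F 1%N r) :
  forall a : B, d (T_exp F br d r a) = T_exp F br d r (d a).
Proof.
move=> a; have c_MC := d_c HB r_odd r_F1 charK.
have c_F1 := c_F1 HB r_F1; have c_even := c_even HB r_odd r_F1.
rewrite /T_exp (d_expB_mul HB c_even c_F1 c_MC charK).
by rewrite (d_exp_ad HB r_odd r_F1 charK) addrK.
Qed.
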